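(* Let $N=\{1,2,\dots,n\}$ be a set of players and let $v:2^N\to\mathbb{R}$ be a monotonic characteristic function with $v(\emptyset)=0$, the grand coalition having value $v(N)$. Let $x=(x_1,\dots,x_n)$ be a payoff vector, where the players are indexed so that $x_1\le x_2\le\dots\le x_n$, and let $(\phi_1,\dots,\phi_n)$ be the Shapley values of the players with the same indices; assume $\phi_n>0$. Then $x$ is both stable and proportional if and only if for every $i\in\{1,\dots,n\}$, $$x_i=\phi_i\,\frac{v(N)}{\phi_n}\qquad\text{and}\qquad \phi_i\,\frac{v(N)}{\phi_n}\;\ge\; v(\{1,2,\dots,i\}).$$
   Context: A characteristic function $v:2^N\to\mathbb{R}$ assigns a value $v(C)$ to each coalition $C\subseteq N$; it is monotonic if $C\subseteq C'$ implies $v(C)\le v(C')$. When the grand coalition $N$ forms, a payoff vector is a vector $x=(x_1,\dots,x_n)\in\mathbb{R}^n$ with $x_i\le v(N)$ for every player $i$ (each player individually receives at most $v(N)$; the sum of payoffs is not restricted). A payoff vector $x$ is stable if for every nonempty coalition $C\subseteq N$ there exists $k\in C$ with $x_k\ge v(C)$. The Shapley value of player $i$ is $$\phi_i=\sum_{S\subseteq N\setminus\{i\}}\frac{|S|!\,(n-|S|-1)!}{n!}\big(v(S\cup\{i\})-v(S)\big).$$ A payoff vector $x$ is proportional if there exists a constant $\alpha>0$ with $x_i=\alpha\phi_i$ for all $i$. *)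

(* Players are 'I_n.+1 (i.e. N = {1,...,n+1} shifted to 0-based);
   coalitions are {set 'I_n.+1}; values in an arbitrary realFieldType R. *)
From mathcomp Require Import all_boot all_order all_algebra.
Set Implicit Arguments. Unset Strict Implicit. Unset Printing Implicit Defensive.
Import Order.TTheory GRing.Theory Num.Theory.
Local Open Scope ring_scope.

Section Game.
Variables (R : realFieldType) (n : nat).
Notation P := ('I_n).

Definition monotonic (v : {set P} -> R) : Prop :=
  forall C C' : {set P}, C \subset C' -> v C <= v C'.

Definition payoff_vector (v : {set P} -> R) (x : P -> R) : Prop :=
  forall i, x i <= v [set: P].

Definition stable (v : {set P} -> R) (x : P -> R) : Prop :=
  forall C : {set P}, C != set0 -> exists2 k, k \in C & v C <= x k.

Definition shapley (v : {set P} -> R) (i : P) : R :=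
  \sum_(S : {set P} | i \notin S)
     ((#|S|`! * (n - #|S| - 1)`!)%:R / (n`!)%:R) * (v (i |: S) - v S).

Definition proportional (v : {set P} -> R) (x : P -> R) : Prop :=
  exists2 alpha : R, 0 < alpha & forall i, x i = alpha * shapley v i.
End Game.

(* For a nondecreasing payoff vector, stability is equivalent to the prefix
   inequalities v({1,...,i}) <= x_i: a coalition C is satisfied by its largest
   member k, because C is contained in {1,...,k} and v is monotonic.  At i = n
   the prefix is N, so x_n = v(N), which pins the proportionality constant to
   v(N)/phi_n; this constant is positive because phi_n > 0 excludes the null
   game. *)
From mathcomp Require Import all_boot all_order all_algebra.
Set Implicit Arguments. Unset Strict Implicit. Unset Printing Implicit Defensive.
Import Order.TTheory GRing.Theory Num.Theory.
Local Open Scope ring_scope.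

Section Stability.
Variables (R : realFieldType) (n : nat) (v : {set 'I_n} -> R) (x : 'I_n -> R).
Hypothesis x_nondecr : forall i j : 'I_n, (i <= j)%N -> x i <= x j.

Lemma stable_prefix_le : stable v x ->
  forall i : 'I_n, v [set j : 'I_n | (j <= i)%N] <= x i.
Proof.
move=> st i.
have [|k] := st [set j : 'I_n | (j <= i)%N].
  by apply/set0Pn; exists i; rewrite inE.
by rewrite inE => le_ki /le_trans; apply; apply: x_nondecr.
Qed.

Lemma prefix_le_stable : monotonic v ->
  (forall i : 'I_n, v [set j : 'I_n | (j <= i)%N] <= x i) -> stable v x.
Proof.
move=> mono prefix_le C /set0Pn [k0 k0C].
pose k := [arg max_(k > k0 in C) (k : nat)].
have [kC k_max] : k \in C /\ forall j, j \in C -> (j <= k)%N.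
  by rewrite /k; case: arg_maxnP.
exists k => //; apply: le_trans (prefix_le k).
by apply: mono; apply/subsetP => j jC; rewrite inE k_max.
Qed.

End Stability.

Lemma stable_max_payoff (R : realFieldType) (n : nat)
    (v : {set 'I_n.+1} -> R) (x : 'I_n.+1 -> R) :
  payoff_vector v x -> (forall i j : 'I_n.+1, (i <= j)%N -> x i <= x j) ->
  stable v x -> x ord_max = v [set: 'I_n.+1].
Proof.
move=> pay x_nondecr st; apply: le_anti; rewrite pay /=.
have -> : [set: 'I_n.+1] = [set j : 'I_n.+1 | (j <= @ord_max n)%N].
  by apply/setP => j; rewrite !inE -ltnS ltn_ord.
exact: stable_prefix_le.
Qed.

Section NullGame.
Variables (R : realFieldType) (n : nat) (v : {set 'I_n} -> R).

Lemma shapley_null_game (i : 'I_n) : (forall C, v C = 0) -> shapley v i = 0.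
Proof. by move=> v0; rewrite /shapley big1 // => S _; rewrite !v0 subrr mulr0. Qed.

Lemma grand_coalition_gt0 (i : 'I_n) : monotonic v -> v set0 = 0 ->
  0 < shapley v i -> 0 < v [set: 'I_n].
Proof.
move=> mono v0 phi_gt0; rewrite ltNge; apply/negP => vN_le0.
suff /(shapley_null_game i) phi0 : forall C, v C = 0 by rewrite phi0 ltxx in phi_gt0.
move=> C; apply: le_anti; rewrite (le_trans (mono _ _ (subsetT C))) //=.
by rewrite -v0 mono ?sub0set.
Qed.

End NullGame.

Lemma proportional_normalized (R : realFieldType) (n : nat)
    (v : {set 'I_n} -> R) (x : 'I_n -> R) (k : 'I_n) :
  shapley v k != 0 -> proportional v x ->
  forall i, x i = shapley v i * (x k / shapley v k).
Proof. by move=> phi_k_neq0 [alpha _ xE] i; rewrite !xE mulfK // mulrC. Qed.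

Theorem theorem6 (R : realFieldType) (n : nat)
  (v : {set 'I_n.+1} -> R) (x : 'I_n.+1 -> R) :
  monotonic v -> v set0 = 0 ->
  payoff_vector v x ->
  (forall i j : 'I_n.+1, (i <= j)%N -> x i <= x j) ->
  0 < shapley v ord_max ->
  (stable v x /\ proportional v x) <->
  (forall i : 'I_n.+1,
     x i = shapley v i * (v [set: 'I_n.+1] / shapley v ord_max) /\
     v [set j : 'I_n.+1 | (j <= i)%N] <=
       shapley v i * (v [set: 'I_n.+1] / shapley v ord_max)).
Proof.
move=> mono v0 pay x_nondecr phi_gt0.
split=> [[st prop] i | scaled].
  have xE := proportional_normalized (lt0r_neq0 phi_gt0) prop.
  rewrite -(stable_max_payoff pay x_nondecr st) -xE.
  by split=> //; apply: stable_prefix_le.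
split.
  by apply: prefix_le_stable => // i; rewrite (scaled i).1; exact: (scaled i).2.
exists (v [set: 'I_n.+1] / shapley v ord_max); last by move=> i; rewrite (scaled i).1 mulrC.
by rewrite divr_gt0 // (grand_coalition_gt0 mono v0 phi_gt0).
Qed.
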